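(* Let $A$ be a set of agents and let $x$ be an agent with $x \notin A$. Suppose $PC(A,\phi)$ holds and all agents are honest (they communicate only truths). Suppose further that for some agent $v_x \in A$ the following two communications take place: $v_x$ communicates to $x$ the fact $PC(A,\phi)$, and $v_x$ communicates to every member of $A$ the fact $K_x\,\phi$. Then $PC(A \cup \{x\},\phi)$ holds.
   Context: The setting is epistemic (temporal) logic over a set of agents. For an agent $x$ and predicate $\phi$, $K_x\,\phi$ means ''agent $x$ knows $\phi$''; only truths can be known (if $K_x\,\phi$ then $\phi$). Public certifiability of a fact $\phi$ among a set $A$ of agents is defined by $PC(A,\phi) :\iff \forall x,y \in A,\ K_x K_y\,\phi$. A communication ''$v \to B : \psi$'' means agent $v$ tells the fact $\psi$ to the agents in $B$; since agents are honest, a recipient of such a communication (with delivery assumed, i.e. liveness) comes to know $\psi$. *)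

(* Interpreted-systems semantics of knowledge (Fagin–Halpern–Moses–Vardi):
   facts are predicates on points; agent a knows phi at point w iff phi holds at every
   point a cannot distinguish from w (indistinguishability is an equivalence, i.e. S5). *)
From Stdlib Require Import RelationClasses.

Record System := {
  Agent : Type;
  Point : Type;
  indist : Agent -> Point -> Point -> Prop;
  indist_equiv : forall a, Equivalence (indist a);
  (* comm v B psi w : by point w, agent v has communicated fact psi to the agents in B *)
  comm : Agent -> (Agent -> Prop) -> (Point -> Prop) -> Point -> Prop
}.

Definition fact (S : System) := Point S -> Prop.

Definition K (S : System) (x : Agent S) (phi : fact S) : fact S :=
  fun w => forall w', indist S x w w' -> phi w'.

Definition PC (S : System) (A : Agent S -> Prop) (phi : fact S) : fact S :=
  fun w => forall x y, A x -> A y -> K S x (K S y phi) w.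

Definition Honest (S : System) : Prop :=
  forall v B psi w, comm S v B psi w -> psi w.

Definition Live (S : System) : Prop :=
  forall v B psi w b, comm S v B psi w -> B b -> K S b psi w.

Definition union1 {T : Type} (A : T -> Prop) (x : T) : T -> Prop :=
  fun a => A a \/ a = x.

Definition single {T : Type} (x : T) : T -> Prop := fun a => a = x.

(* For the new pairs of PC(A ∪ {x}, phi): x knows PC(A, phi) by delivery of the
   first message, hence K_x K_b phi for b in A; every a in A learns K_x phi from
   the second message; and K_x phi, true by honesty, yields K_x K_x phi by
   introspection. *)
From Stdlib Require Import RelationClasses.

Section Knowledge.

Variable S : System.

Lemma K_truth (a : Agent S) (phi : fact S) (w : Point S) :
  K S a phi w -> phi w.
Proof.
  intros Hphi. apply Hphi. pose proof (indist_equiv S a). reflexivity.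
Qed.

Lemma K_introspect (a : Agent S) (phi : fact S) (w : Point S) :
  K S a phi w -> K S a (K S a phi) w.
Proof.
  intros Hphi w1 H1 w2 H2. apply Hphi.
  pose proof (indist_equiv S a). etransitivity; eassumption.
Qed.

Lemma K_mono (a : Agent S) (phi psi : fact S) (w : Point S) :
  (forall w', phi w' -> psi w') -> K S a phi w -> K S a psi w.
Proof.
  intros Himp Hphi w' H. apply Himp, Hphi, H.
Qed.

Lemma PC_K (A : Agent S -> Prop) (phi : fact S) (b : Agent S) (w : Point S) :
  A b -> PC S A phi w -> K S b phi w.
Proof.
  intros Hb HPC. exact (K_truth _ _ _ (HPC b b Hb Hb)).
Qed.

Lemma PC_union1 (A : Agent S -> Prop) (x : Agent S) (phi : fact S) (w : Point S) :
  PC S A phi w ->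
  K S x (PC S A phi) w ->
  (forall a, A a -> K S a (K S x phi) w) ->
  K S x phi w ->
  PC S (union1 A x) phi w.
Proof.
  intros HPC KxPC KAKx Kx a b [Ha | ->] [Hb | ->].
  - exact (HPC a b Ha Hb).
  - exact (KAKx a Ha).
  - exact (K_mono _ _ _ _ (fun w' => PC_K A phi b w' Hb) KxPC).
  - exact (K_introspect _ _ _ Kx).
Qed.

End Knowledge.

Theorem lemma1 (S : System) (A : Agent S -> Prop) (x : Agent S) (phi : fact S)
    (w : Point S) :
  ~ A x ->
  PC S A phi w ->
  Honest S ->
  Live S ->
  (exists vx, A vx /\
     comm S vx (single x) (PC S A phi) w /\
     comm S vx A (K S x phi) w) ->
  PC S (union1 A x) phi w.
Proof.
  intros _ HPC Hhonest Hlive [vx [_ [Hto_x Hto_A]]].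
  apply PC_union1.
  - exact HPC.
  - exact (Hlive _ _ _ _ x Hto_x eq_refl).
  - intros a Ha. exact (Hlive _ _ _ _ a Hto_A Ha).
  - exact (Hhonest _ _ _ _ Hto_A).
Qed.
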